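(* For every integer $v \ge 4$, \[ \beta(1,v,4) = \begin{cases} D(v,4) & \text{if } 4 \le v \le 13,\\ 13 & \text{if } 14 \le v \le 39,\\ \left\lfloor \frac{v-1}{3} \right\rfloor & \text{if } v \ge 40. \end{cases} \]
   Context: For integers $v \ge k \ge 2$, a $(v,k)$-packing is a pair $(X,\mathcal{B})$ where $X$ is a set of $v$ points and $\mathcal{B}$ is a set of $k$-subsets of $X$ (blocks) such that every pair of distinct points lies in at most one block. $D(v,k)$ denotes the maximum number of blocks in a $(v,k)$-packing. A partial parallel class (PPC) is a set of pairwise disjoint blocks; its size is the number of blocks. A PPC of size $\rho$ is maximum if the packing has no PPC of size $\rho+1$. $\beta(\rho,v,k)$ denotes the maximum number of blocks in a $(v,k)$-packing in which the maximum PPC has size $\rho$; thus $\beta(1,v,4)$ is the maximum number of blocks in a $(v,4)$-packing in which no two blocks are disjoint. *)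

From mathcomp Require Import all_boot all_order.
Set Implicit Arguments. Unset Strict Implicit. Unset Printing Implicit Defensive.

Definition packing (v k : nat) (B : {set {set 'I_v}}) : bool :=
  [forall b in B, #|b| == k] &&
  [forall x : 'I_v, forall y : 'I_v,
     (x != y) ==> (#|[set b in B | (x \in b) && (y \in b)]| <= 1)].

Definition ppc (v : nat) (B P : {set {set 'I_v}}) : bool :=
  (P \subset B) &&
  [forall b1 in P, forall b2 in P, (b1 != b2) ==> [disjoint b1 & b2]].

Definition max_ppc (v : nat) (B : {set {set 'I_v}}) : nat :=
  \max_(P : {set {set 'I_v}} | ppc B P) #|P|.

Definition D (v k : nat) : nat :=
  \max_(B : {set {set 'I_v}} | packing k B) #|B|.

Definition beta (rho v k : nat) : nat :=
  \max_(B : {set {set 'I_v}} | packing k B && (max_ppc B == rho)) #|B|.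

From mathcomp Require Import all_boot all_order zify.
Set Implicit Arguments. Unset Strict Implicit. Unset Printing Implicit Defensive.

(* Two blocks of a packing of k-sets share at most one point, so the blocks
   through a point p are disjoint off p and there are at most (v-1)/(k-1) of
   them.  If all blocks of an intersecting packing pass through one point, this
   bounds the packing; otherwise every point q misses some block b, the blocks
   through q meet b in distinct points, so q lies on at most k blocks, and
   counting the incidences between a fixed block and the others gives at most
   k(k-1)+1 blocks.  For k = 4 this is max(13, (v-1)/3), attained by the lines
   of PG(2,3) and by a star of blocks through one point.  For v <= 13 every
   packing is compared with an intersecting one: if it has two disjoint blocks,
   every other block meets the v-8 points outside them at least twice, which
   bounds its size by that of an explicit intersecting packing on v points. *)

Definition deg (T : finType) (B : {set {set T}}) (x : T) : nat :=
  #|[set c in B | x \in c]|.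

Lemma sum_card_setI_deg (T : finType) (B : {set {set T}}) (A : {set T}) :
  \sum_(c in B) #|c :&: A| = \sum_(x in A) deg B x.
Proof.
have card_in_sum (U : finType) (C : {pred U}) (P : pred U) :
    #|[set x in C | P x]| = \sum_(x in C) P x.
  by rewrite -sum1dep_card big_mkcondr; apply: eq_bigr => x _; case: (P x).
have setI_sep (c : {set T}) : c :&: A = [set x in A | x \in c].
  by apply/setP => x; rewrite !inE andbC.
under eq_bigr do rewrite setI_sep card_in_sum.
under [RHS]eq_bigr do rewrite /deg card_in_sum.
exact: exchange_big.
Qed.

Definition intersecting (T : finType) (B : {set {set T}}) : bool :=
  [forall b1 in B, forall b2 in B, (b1 != b2) ==> ~~ [disjoint b1 & b2]].

Lemma intersectingP (T : finType) (B : {set {set T}}) :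
  reflect {in B &, forall b1 b2, b1 != b2 -> 0 < #|b1 :&: b2|} (intersecting B).
Proof.
apply: (iffP forall_inP) => [I b1 b2 h1 h2 ne | I b1 h1].
  by rewrite card_gt0 setI_eq0; move/forall_inP/(_ _ h2)/implyP: (I _ h1); apply.
by apply/forall_inP => b2 h2; apply/implyP => ne; rewrite -setI_eq0 -card_gt0 I.
Qed.

Lemma packingE v k (B : {set {set 'I_v}}) :
  packing k B = [forall b in B, #|b| == k] &&
    [forall b1 in B, forall b2 in B, (b1 != b2) ==> (#|b1 :&: b2| <= 1)].
Proof.
congr andb; apply/forallP/forall_inP => [pairs b1 h1 | meets x].
  apply/forall_inP => b2 h2; apply/implyP => ne; rewrite leqNgt.
  apply/card_gt1P => -[x [y [/setIP[x1 x2] /setIP[y1 y2] xy]]].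
  move/forallP/(_ y)/implyP/(_ xy): (pairs x); rewrite leqNgt => /negP; apply.
  by apply/card_gt1P; exists b1, b2; rewrite !inE h1 h2 x1 x2 y1 y2.
apply/forallP => y; apply/implyP => xy; rewrite leqNgt.
apply/card_gt1P => -[b1 [b2 [/setIdP[h1 /andP[x1 y1]] /setIdP[h2 /andP[x2 y2]] ne]]].
move/forall_inP/(_ _ h2)/implyP/(_ ne): (meets _ h1); rewrite leqNgt => /negP; apply.
by apply/card_gt1P; exists x, y; rewrite !inE x1 x2 y1 y2.
Qed.

Section Packing.

Variables (v k : nat) (B : {set {set 'I_v}}).
Hypothesis packB : packing k B.

Lemma packing_card b : b \in B -> #|b| = k.
Proof. by case/andP: packB => /forall_inP card_k _ /card_k /eqP. Qed.

Lemma packing_meet b1 b2 : b1 \in B -> b2 \in B -> b1 != b2 -> #|b1 :&: b2| <= 1.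
Proof.
by move: packB; rewrite packingE => /andP[_ /forall_inP meets] /meets /forall_inP m /m /implyP.
Qed.

Lemma deg_through_le1 x y : x != y -> deg [set c in B | x \in c] y <= 1.
Proof.
case/andP: packB => _ /forallP/(_ x)/forallP/(_ y)/implyP pair /pair.
by apply: leq_trans; apply: subset_leq_card; apply/subsetP => c; rewrite !inE andbA.
Qed.

Lemma packing_deg x : (k - 1) * deg B x <= v - 1.
Proof.
have := sum_card_setI_deg [set c in B | x \in c] [set~ x].
have -> : \sum_(c in [set c in B | x \in c]) #|c :&: [set~ x]| = deg B x * (k - 1).
  rewrite -sum_nat_const; apply: eq_bigr => c /setIdP[cB xc].
  by rewrite -setDE -(packing_card cB) (cardsD1 x c) xc add1n subn1.
rewrite mulnC => ->; apply: (@leq_trans #|[set~ x]|).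
  by rewrite -sum1_card; apply: leq_sum => y; rewrite !inE eq_sym; exact: deg_through_le1.
by rewrite cardsC1 card_ord subn1.
Qed.

Lemma deg_le_div x : 1 < k -> deg B x <= (v - 1) %/ (k - 1).
Proof. by move=> k_gt1; rewrite leq_divRL ?subn_gt0 // mulnC packing_deg. Qed.

Lemma card_common_point p :
  {in B, forall b : {set 'I_v}, p \in b} -> (k - 1) * #|B| <= v - 1.
Proof.
move=> pB; suff -> : #|B| = deg B p by apply: packing_deg.
by apply: eq_card => c; rewrite inE andb_idr //; apply: pB.
Qed.

Lemma card_setU_disjoint_blocks b1 b2 : b1 \in B -> b2 \in B -> [disjoint b1 & b2] ->
  #|b1 :|: b2| = 2 * k.
Proof.
move=> b1B b2B; rewrite -setI_eq0 => /eqP b12.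
by rewrite cardsU b12 cards0 subn0 !packing_card // addnn mul2n.
Qed.

Lemma disjoint_blocks_le b1 b2 : b1 \in B -> b2 \in B -> [disjoint b1 & b2] -> 2 * k <= v.
Proof.
move=> b1B b2B d; rewrite -(card_setU_disjoint_blocks b1B b2B d).
by rewrite -[X in _ <= X]card_ord max_card.
Qed.

Lemma disjoint_blocks_card b1 b2 : 1 < k -> b1 \in B -> b2 \in B -> b1 != b2 ->
  [disjoint b1 & b2] -> (k - 2) * (#|B| - 2) <= (v - 2 * k) * ((v - 1) %/ (k - 1)).
Proof.
move=> k_gt1 b1B b2B b12 d; set R := ~: (b1 :|: b2); set B' := B :\ b1 :\ b2.
have cardR : #|R| = v - 2 * k.
  by rewrite cardsCs setCK card_ord (card_setU_disjoint_blocks b1B b2B d).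
have cardB : #|B| - 2 = #|B'|.
  by rewrite (cardsD1 b1 B) (cardsD1 b2 (B :\ b1)) !inE b1B b2B eq_sym b12 -/B' addnA addKn.
have meetR c : c \in B' -> k - 2 <= #|c :&: R|.
  rewrite !inE => /and3P[cb2 cb1 cB].
  rewrite leq_subLR -(packing_card cB) -(cardsID (b1 :|: b2) c) setDE -/R leq_add2r setIUr.
  apply: leq_trans (leq_card_setU _ _) _.
  by rewrite (leq_add (packing_meet cB b1B cb1) (packing_meet cB b2B cb2)).
have upper : \sum_(x in R) deg B' x <= (v - 2 * k) * ((v - 1) %/ (k - 1)).
  rewrite -cardR -sum_nat_const; apply: leq_sum => x _.
  apply: leq_trans (deg_le_div x k_gt1); apply: subset_leq_card.
  by apply/subsetP => c; rewrite !inE => /andP[/and3P[_ _ ->] ->].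
have lower : (k - 2) * #|B'| <= \sum_(c in B') #|c :&: R|.
  by rewrite mulnC -sum_nat_const; apply: leq_sum.
by rewrite cardB (leq_trans lower) // sum_card_setI_deg.
Qed.

Hypothesis interB : intersecting B.

Lemma intersecting_deg_le b q : b \in B -> q \notin b -> deg B q <= k.
Proof.
move=> bB qb; set Bq := [set c in B | q \in c].
have lower : #|Bq| <= \sum_(c in Bq) #|c :&: b|.
  rewrite -sum1_card; apply: leq_sum => c /setIdP[cB qc].
  by apply: (intersectingP _ interB) => //; apply: contraNneq qb => <-.
rewrite /deg -/Bq (leq_trans lower) // sum_card_setI_deg -(packing_card bB) -sum1_card.
by apply: leq_sum => x xb; rewrite deg_through_le1 //; apply: contraNneq qb => ->.
Qed.

Lemma card_no_common_point :
  (forall p, exists2 b, b \in B & p \notin b) -> #|B| <= k * (k - 1) + 1.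
Proof.
move=> nocommon; have [-> | [b0 b0B]] := set_0Vmem B; first by rewrite cards0.
have upper : \sum_(x in b0) deg B x <= k * k.
  rewrite -{1}(packing_card b0B) -sum_nat_const; apply: leq_sum => x _.
  by have [b bB xb] := nocommon x; apply: intersecting_deg_le bB xb.
have lower : k + \sum_(c in B) 1 <= \sum_(c in B) #|c :&: b0| + 1.
  rewrite (bigD1 b0 b0B) [in X in _ <= X](bigD1 b0 b0B) /= setIid (packing_card b0B).
  rewrite addnA addnAC leq_add2r leq_add2l.
  by apply: leq_sum => c /andP[cB cb0]; apply: (intersectingP _ interB).
rewrite sum1_card sum_card_setI_deg in lower.
have := leq_trans lower (leq_add upper (leqnn 1)); nia.
Qed.

Lemma intersecting_card_le :
  1 < k -> #|B| <= maxn (k * (k - 1) + 1) ((v - 1) %/ (k - 1)).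
Proof.
move=> k_gt1.
case: (pickP [pred p | [forall b in B, p \in b]]) => [p /forall_inP pB | nocommon].
  by rewrite leq_max leq_divRL ?subn_gt0 // [#|B| * _]mulnC (card_common_point pB) orbT.
rewrite leq_max card_no_common_point // => p.
by apply/exists_inP; rewrite -negb_forall_in; apply/negbT/nocommon.
Qed.

End Packing.

Section MaxPPC.

Variables (v : nat) (B : {set {set 'I_v}}).

Lemma ppc_max_ppc P : ppc B P -> #|P| <= max_ppc B.
Proof. exact: (@leq_bigmax_cond _ (ppc B) (fun P => #|P|)). Qed.

Lemma max_ppc_le_card : max_ppc B <= #|B|.
Proof. by apply/bigmax_leqP => P /andP[PB _]; apply: subset_leq_card. Qed.

Lemma ppc_set1 b : b \in B -> ppc B [set b].
Proof.
move=> bB; rewrite /ppc sub1set bB.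
by apply/forall_inP => b1 /set1P-> /=; apply/forall_inP => b2 /set1P->; rewrite eqxx.
Qed.

Lemma ppc_set2 b1 b2 : b1 \in B -> b2 \in B -> [disjoint b1 & b2] -> ppc B [set b1; b2].
Proof.
move=> b1B b2B d; rewrite /ppc subUset !sub1set b1B b2B /=.
apply/forall_inP => c1 /set2P c1E; apply/forall_inP => c2 /set2P c2E; apply/implyP.
by case: c1E c2E => -> [] ->; rewrite ?eqxx // disjoint_sym.
Qed.

Lemma max_ppc_eq1 : (max_ppc B == 1) = (B != set0) && intersecting B.
Proof.
apply/idP/andP => [/eqP ppc1 | [/set0Pn[b bB] /intersectingP inter]].
  split; first by rewrite -card_gt0 (leq_trans _ max_ppc_le_card) ?ppc1.
  apply/forall_inP => b1 b1B; apply/forall_inP => b2 b2B; apply/implyP => b12.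
  apply/negP => /(ppc_set2 b1B b2B)/ppc_max_ppc.
  by rewrite cards2 b12 ppc1.
rewrite eqn_leq -{2}(cards1 b) ppc_max_ppc ?ppc_set1 // andbT.
apply/bigmax_leqP => P /andP[/subsetP PB /forall_inP disjP]; rewrite leqNgt.
apply/card_gt1P => -[b1 [b2 [b1P b2P b12]]].
move: (inter _ _ (PB _ b1P) (PB _ b2P) b12).
by rewrite card_gt0 setI_eq0 (implyP (forall_inP (disjP _ b1P) _ b2P) b12).
Qed.

End MaxPPC.

Lemma intersecting_card_le_beta1 v k (B : {set {set 'I_v}}) :
  packing k B -> B != set0 -> intersecting B -> #|B| <= beta 1 v k.
Proof.
move=> packB nzB interB.
apply: (@leq_bigmax_cond _ (fun B => packing k B && (max_ppc B == 1)) (fun B => #|B|)).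
by rewrite packB max_ppc_eq1 nzB interB.
Qed.

Lemma beta_le_D rho v k : beta rho v k <= D v k.
Proof.
apply/bigmax_leqP => B /andP[packB _].
exact: (@leq_bigmax_cond _ (packing k) (fun B => #|B|)).
Qed.

Lemma beta1_le_max v k :
  1 < k -> beta 1 v k <= maxn (k * (k - 1) + 1) ((v - 1) %/ (k - 1)).
Proof.
move=> k_gt1; apply/bigmax_leqP => B; rewrite max_ppc_eq1 => /and3P[packB _ interB].
exact: intersecting_card_le.
Qed.

Definition ord_set v (l : seq nat) : {set 'I_v} := [set i : 'I_v | val i \in l].

Lemma card_ord_set v l : all (fun x => x < v) l -> uniq l -> #|ord_set v l| = size l.
Proof.
move=> /allP lt_v uniq_l; rewrite cardE -(size_map val (enum (ord_set v l))).
apply/perm_size/uniq_perm => //; first by rewrite map_inj_uniq ?enum_uniq //; apply: val_inj.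
move=> x; apply/mapP/idP => [[i] | xl]; first by rewrite mem_enum inE => ? ->.
by exists (Ordinal (lt_v x xl)); rewrite ?mem_enum ?inE.
Qed.

Lemma ord_setI v l1 l2 : ord_set v l1 :&: ord_set v l2 = ord_set v [seq x <- l1 | x \in l2].
Proof. by apply/setP => i; rewrite !inE mem_filter andbC. Qed.

Definition seq_intersecting_packing (k v : nat) (ls : seq (seq nat)) : bool :=
  [&& ls != [::], uniq ls,
      all (fun l : seq nat => [&& uniq l, all (fun x => x < v) l & size l == k]) ls &
      all (fun l1 : seq nat =>
        all (fun l2 : seq nat => (l1 == l2) || (count (mem l2) l1 == 1)) ls) ls].

Lemma seq_intersecting_packing_widen k v w ls :
  v <= w -> seq_intersecting_packing k v ls -> seq_intersecting_packing k w ls.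
Proof.
move=> vw /and4P[nz_ls uniq_ls /allP blocks meets]; apply/and4P; split=> //.
apply/allP => l /blocks /and3P[-> /allP lt_v ->]; rewrite andbT.
by apply/allP => x /lt_v /leq_trans; apply.
Qed.

Lemma seq_intersecting_packing_le_beta1 k v ls :
  1 < k -> seq_intersecting_packing k v ls -> size ls <= beta 1 v k.
Proof.
move=> k_gt1 /and4P[nz_ls uniq_ls /allP blocks /allP meets].
have card_k l : l \in ls -> #|ord_set v l| = k.
  by case/blocks/and3P => uniq_l lt_v /eqP <-; apply: card_ord_set.
have meet1 l1 l2 : l1 \in ls -> l2 \in ls -> l1 != l2 ->
    #|ord_set v l1 :&: ord_set v l2| = 1.
  move=> l1s l2s l12; case/blocks/and3P: (l1s) => uniq_l1 /allP lt_v _.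
  rewrite ord_setI card_ord_set ?filter_uniq ?size_filter //.
    by move/allP/(_ _ l2s): (meets _ l1s); rewrite (negbTE l12) => /eqP.
  by apply/allP => x; rewrite mem_filter => /andP[_ /lt_v].
have inj : {in ls &, injective (ord_set v)}.
  move=> l1 l2 l1s l2s E; apply/eqP; apply: contraTT k_gt1 => l12.
  by move: (meet1 _ _ l1s l2s l12); rewrite E setIid card_k // => ->.
set B := [set:: map (ord_set v) ls].
have cardB : #|B| = size ls.
  by rewrite cardsE (card_uniqP _) ?size_map // map_inj_in_uniq.
have blockP b : b \in B -> exists2 l, l \in ls & b = ord_set v l.
  by rewrite inE => /mapP.
rewrite -cardB; apply: intersecting_card_le_beta1.
- rewrite packingE; apply/andP; split; apply/forall_inP => b /blockP[l ls_l ->].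
    by rewrite card_k.
  apply/forall_inP => b2 /blockP[l2 ls_l2 ->]; apply/implyP => l12.
  by rewrite meet1 //; apply: contraNneq l12 => ->.
- by rewrite -card_gt0 cardB lt0n size_eq0.
- apply/intersectingP => b1 b2 /blockP[l1 ls_l1 ->] /blockP[l2 ls_l2 ->] l12.
  by rewrite meet1 //; apply: contraNneq l12 => ->.
Qed.

(* The lines of the projective plane of order 3: the translates of the
   difference set {0, 1, 3, 9} modulo 13. *)
Definition pg23_lines : seq (seq nat) :=
  [seq [seq (x + i) %% 13 | x <- [:: 0; 1; 3; 9]] | i <- iota 0 13].

(* For 11 <= v <= 13, the lines of PG(2,3) inside the first v points; the
   value outside 8 <= v <= 13 is irrelevant. *)
Definition small_design (v : nat) : seq (seq nat) :=
  match v with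
  | 8 => [:: [:: 0; 1; 2; 3]; [:: 0; 4; 5; 6]]
  | 9 => [:: [:: 0; 1; 2; 3]; [:: 0; 4; 5; 6]; [:: 1; 4; 7; 8]]
  | 10 => [:: [:: 0; 1; 2; 3]; [:: 0; 4; 5; 6]; [:: 1; 4; 7; 8]; [:: 2; 5; 7; 9];
              [:: 3; 6; 8; 9]]
  | _ => [seq l <- pg23_lines | all (fun x => x < v) l]
  end.

Lemma pg23_lines_spec : seq_intersecting_packing 4 13 pg23_lines.
Proof. by []. Qed.

Lemma small_design_spec v :
  8 <= v <= 13 -> seq_intersecting_packing 4 v (small_design v).
Proof.
have : all (fun v => seq_intersecting_packing 4 v (small_design v)) (iota 8 6) by [].
by move/allP/(_ v) => spec v_range; apply: spec; rewrite mem_iota.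
Qed.

Lemma small_design_size v :
  8 <= v <= 13 -> 2 + (v - 8) * ((v - 1) %/ 3) %/ 2 <= size (small_design v).
Proof.
have : all (fun v => 2 + (v - 8) * ((v - 1) %/ 3) %/ 2 <= size (small_design v)) (iota 8 6).
  by [].
by move/allP/(_ v) => size_ok v_range; apply: size_ok; rewrite mem_iota.
Qed.

Definition star_design (m n : nat) : seq (seq nat) :=
  [seq 0 :: iota (m * i).+1 m | i <- iota 0 n].

Lemma star_design_spec m n v :
  0 < m -> 0 < n -> m * n < v -> seq_intersecting_packing m.+1 v (star_design m n).
Proof.
move=> m_gt0 n_gt0 mn_v.
have block_mem i x : x \in iota (m * i).+1 m = (m * i < x <= m * i + m).
  by rewrite mem_iota; lia.
apply/and4P; split.
- by rewrite -size_eq0 size_map size_iota -lt0n.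
- rewrite map_inj_uniq ?iota_uniq // => i j /(congr1 (head 0 \o behead)).
  by rewrite -(prednK m_gt0) /= => /succn_inj/eqP; rewrite prednK // eqn_pmul2l // => /eqP.
- apply/allP => l /mapP[i]; rewrite mem_iota add0n => i_n ->.
  rewrite /= size_iota eqxx iota_uniq block_mem !andbT /=; apply/andP; split; first lia.
  by apply/allP => x; rewrite block_mem; nia.
- apply/allP => l1 /mapP[i _ ->]; apply/allP => l2 /mapP[j _ ->].
  have [-> | ij] := eqVneq i j; first by rewrite eqxx.
  apply/orP; right; rewrite /= add1n eqSS -[X in _ == X](count_pred0 (iota (m * i).+1 m)).
  apply/eqP/eq_in_count => x; rewrite block_mem => /andP[ix xi] /=.
  rewrite inE block_mem; apply/negbTE; rewrite negb_or; apply/andP; split.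
    by rewrite -lt0n (leq_ltn_trans _ ix).
  apply: contra ij => /andP[jx xj].
  have le_block i1 i2 : m * i1 < x -> x <= m * i2 + m -> i1 <= i2.
    by move=> lo hi; rewrite -ltnS -(ltn_pmul2l m_gt0) mulnS; lia.
  by rewrite eqn_leq (le_block i j) ?(le_block j i).
Qed.

Lemma star_le_beta1 v m : 0 < m -> (v - 1) %/ m <= beta 1 v m.+1.
Proof.
move=> m_gt0; set n := (v - 1) %/ m; have [-> // | n_gt0] := posnP n.
have <- : size (star_design m n) = n by rewrite size_map size_iota.
apply: seq_intersecting_packing_le_beta1; first by rewrite ltnS.
apply: star_design_spec => //; apply: leq_ltn_trans (_ : _ <= v - 1) _.
  by rewrite mulnC leq_divM.
rewrite subn1 ltn_predL lt0n; apply/eqP => v0.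
by move: n_gt0; rewrite /n v0 sub0n div0n.
Qed.

Lemma D_le_beta1_small v : v <= 13 -> D v 4 <= beta 1 v 4.
Proof.
move=> v13; apply/bigmax_leqP => B packB.
have [interB | ] := boolP (intersecting B).
  have [-> | nzB] := eqVneq B set0; first by rewrite cards0.
  exact: intersecting_card_le_beta1 packB nzB interB.
rewrite negb_forall_in => /exists_inP[b1 b1B]; rewrite negb_forall_in.
case/exists_inP => b2 b2B; rewrite negb_imply negbK => /andP[b12 d].
have v8 : 8 <= v := disjoint_blocks_le packB b1B b2B d.
have cardB : #|B| <= 2 + (v - 8) * ((v - 1) %/ 3) %/ 2.
  rewrite -leq_subLR leq_divRL // mulnC.
  exact (disjoint_blocks_card packB (isT : 1 < 4) b1B b2B b12 d).
have v_range : 8 <= v <= 13 by rewrite v8 v13.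
apply: leq_trans cardB (leq_trans (small_design_size v_range) _).
exact/seq_intersecting_packing_le_beta1/small_design_spec.
Qed.

Theorem theorem4p1 (v : nat) : 4 <= v ->
  beta 1 v 4 =
    (if v <= 13 then D v 4
     else if v <= 39 then 13
     else (v - 1) %/ 3).
Proof.
(* The bound holds for every v. *)
move=> _; have beta_le := @beta1_le_max v 4 isT.
case: ifP => v13; first by apply/eqP; rewrite eqn_leq beta_le_D D_le_beta1_small.
apply/eqP; rewrite eqn_leq; case: ifP => v39.
  rewrite (leq_trans beta_le) /=; last by rewrite geq_max leqnn; lia.
  have pg23_v : seq_intersecting_packing 4 v pg23_lines.
    by apply: seq_intersecting_packing_widen pg23_lines_spec; lia.
  exact: seq_intersecting_packing_le_beta1 (isT : 1 < 4) pg23_v.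
rewrite (leq_trans beta_le) /=; last by rewrite geq_max leqnn; lia.
exact: star_le_beta1.
Qed.
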